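(* Let $E$ be a regular biordered set satisfying (E1), (E2), (E3) below. Then for all $e,f\in E$ with $f\,\omega\,e'$, in the lattice $L(E)=E/\mathcal L$ we have $\mathcal L(e)\vee\mathcal L(f)=\mathcal L(e\oplus f)$ and $\mathcal L(e)\wedge\mathcal L(f)=\mathcal L(0)=\{0\}$. Conditions: (E1) there exists $0\in E$ with $0\,\omega\,x$ for every $x\in E$; (E2) there is a map $x\mapsto x'$ on $E$ such that for all $x,y\in E$: $(x')'=x$; $y\,\omega^l\,x$ iff $x'\,\omega^r\,y'$; $y\,\omega^l\,x'$ iff $M(y,x)=\{0\}$; (E3) for all $x,y\in E$, if $y\,\omega\,x'$ then $S(x',y')\cap S(y',x')\ne\emptyset$.
   Context: A regular biordered set is a partial algebra isomorphic to the set of idempotents $E(S)$ of a regular semigroup $S$ (regular: every $x$ has $y$ with $xyx=x$), where $ef$ (computed in $S$) is defined when $\{ef,fe\}\cap\{e,f\}\ne\emptyset$. In $E$: $\omega^l=\{(e,f): ef=e\}$, $\omega^r=\{(e,f): fe=e\}$, $\omega=\omega^l\cap\omega^r$; $M(e,f)=\{g\in E: g\,\omega^l\,e,\ g\,\omega^r\,f\}$; for $g,h\in M(e,f)$, $g\preceq h$ iff $eg\,\omega^r\,eh$ and $gf\,\omega^l\,hf$; $S(e,f)=\{h\in M(e,f): g\preceq h\text{ for all }g\in M(e,f)\}$. Under (E1)–(E3), for $f\,\omega\,e'$ the set $S(e',f')\cap S(f',e')$ has exactly one element $k$, and $e\oplus f:=k'$. $\mathcal L=\omega^l\cap(\omega^l)^{-1}$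 with classes $\mathcal L(e)$; $E/\mathcal L$ is ordered by $\mathcal L(e)\le\mathcal L(f)$ iff $e\,\omega^l\,f$ (a lattice under (E1),(E2)). *)

(* A regular biordered set is (up to isomorphism)
   the set E(S) of idempotents of a regular semigroup S, with all products
   computed in S.  We therefore work directly with E(S). *)

Set Implicit Arguments.
Section Biordered.
Variable S : Type.
Variable mul : S -> S -> S.
Local Infix "*" := mul.

Definition associative_op : Prop := forall x y z, x * (y * z) = (x * y) * z.
Definition regular_sg : Prop := forall x, exists y, x * y * x = x.

Definition idem (x : S) : Prop := x * x = x.

Definition omega_l (e f : S) : Prop := e * f = e.
Definition omega_r (e f : S) : Prop := f * e = e.
Definition omega (e f : S) : Prop := omega_l e f /\ omega_r e f.

Definition Lrel (e f : S) : Prop := omega_l e f /\ omega_l f e.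

Definition Mset (e f g : S) : Prop := idem g /\ omega_l g e /\ omega_r g f.

Definition sandwich_le (e f g h : S) : Prop :=
  omega_r (e * g) (e * h) /\ omega_l (g * f) (h * f).

Definition Sset (e f h : S) : Prop :=
  Mset e f h /\ forall g, Mset e f g -> sandwich_le e f g h.

(* In E/L ordered by L(a) <= L(b) iff a omega^l b:
   L(c) is the join of L(a) and L(b) *)
Definition L_is_join (a b c : S) : Prop :=
  omega_l a c /\ omega_l b c /\
  forall g, idem g -> omega_l a g -> omega_l b g -> omega_l c g.

Definition L_is_meet (a b c : S) : Prop :=
  omega_l c a /\ omega_l c b /\
  forall g, idem g -> omega_l g a -> omega_l g b -> omega_l g c.

Definition E1 (z : S) : Prop := idem z /\ forall x, idem x -> omega z x.

Definition E2 (z : S) (pr : S -> S) : Prop :=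
  (forall x, idem x -> idem (pr x)) /\
  (forall x, idem x -> pr (pr x) = x) /\
  (forall x y, idem x -> idem y -> (omega_l y x <-> omega_r (pr x) (pr y))) /\
  (forall x y, idem x -> idem y ->
     (omega_l y (pr x) <-> (forall g, idem g -> (Mset y x g <-> g = z)))).

Definition E3 (pr : S -> S) : Prop :=
  forall x y, idem x -> idem y -> omega y (pr x) ->
    exists k, Sset (pr x) (pr y) k /\ Sset (pr y) (pr x) k.

End Biordered.

(** The involution [x |-> x'] turns [omega^l] into the reverse of [omega^r],
    so the join of [L(e)] and [L(f)] is the image under [x |-> x'] of the
    [omega^r]-largest element below both [e'] and [f'].  The element [k] of
    [S(e',f') /\ S(f',e')] lies below [e'] and [f'], and it is the largest
    such element: for any [x] below both, [x e'] belongs to [M(e',f')], and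
    the maximality of [k] in the sandwich order yields [k x = x].  For the
    meet, a common [omega^l]-lower bound [g] of [e] and [f] also lies below
    [e'] because [f omega e']; hence [M(g,e) = {0}] contains [e g], so that
    [g 0 = g (e g) = g]. *)

From Stdlib Require Import Setoid.

Set Implicit Arguments.

Section Semigroup.

Variables (S : Type) (mul : S -> S -> S).
Hypothesis mul_assoc : associative_op mul.
Local Infix "*" := mul.

Lemma omega_l_trans (x y w : S) :
  omega_l mul x y -> omega_l mul y w -> omega_l mul x w.
Proof.
  unfold omega_l; intros Hxy Hyw.
  transitivity (x * y * w); [rewrite Hxy; reflexivity|].
  rewrite <- mul_assoc, Hyw; exact Hxy.
Qed.

Lemma Mset_mul_omega_l (e g : S) :
  idem mul e -> idem mul g -> omega_l mul g e -> Mset mul g e (e * g).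
Proof.
  unfold Mset, idem, omega_l, omega_r; intros He Hg Hge.
  split; [|split].
  - rewrite <- mul_assoc, (mul_assoc g e g), Hge, Hg; reflexivity.
  - rewrite <- mul_assoc, Hg; reflexivity.
  - rewrite mul_assoc, He; reflexivity.
Qed.

Lemma Mset_mul_omega_r (e f x : S) :
  idem mul e -> idem mul x -> omega_r mul x e -> omega_r mul x f ->
  Mset mul e f (x * e).
Proof.
  unfold Mset, idem, omega_l, omega_r; intros He Hx Hxe Hxf.
  split; [|split].
  - rewrite <- mul_assoc, (mul_assoc e x e), Hxe, mul_assoc, Hx; reflexivity.
  - rewrite <- mul_assoc, He; reflexivity.
  - rewrite mul_assoc, Hxf; reflexivity.
Qed.

Lemma Sset_omega_r_max (e f k x : S) :
  Sset mul e f k -> omega_r mul k e ->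
  idem mul e -> idem mul x -> omega_r mul x e -> omega_r mul x f ->
  omega_r mul x k.
Proof.
  intros [_ Hmax] Hke He Hx Hxe Hxf.
  destruct (Hmax _ (Mset_mul_omega_r He Hx Hxe Hxf)) as [Hle _].
  unfold idem, omega_r in *.
  rewrite Hke, (mul_assoc e x e), Hxe in Hle.
  assert (Hxex : x * e * x = x) by (rewrite <- mul_assoc, Hxe; exact Hx).
  transitivity (k * (x * e * x)); [rewrite Hxex; reflexivity|].
  rewrite mul_assoc, Hle; exact Hxex.
Qed.

Section Complemented.

Variables (z : S) (pr : S -> S).
Hypothesis HE2 : E2 mul z pr.

Lemma omega_l_pr (x y : S) :
  idem mul x -> idem mul y -> omega_l mul y (pr x) <-> omega_r mul x (pr y).
Proof.
  destruct HE2 as (pr_idem & pr_inv & pr_omega & _); intros Hx Hy.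
  rewrite (pr_omega _ _ (pr_idem _ Hx) Hy), pr_inv by exact Hx.
  reflexivity.
Qed.

Lemma Sset_pr_L_is_join (e f k : S) :
  idem mul e -> idem mul f -> Sset mul (pr e) (pr f) k ->
  omega_r mul k (pr e) -> omega_r mul k (pr f) -> L_is_join mul e f (pr k).
Proof.
  destruct HE2 as (pr_idem & pr_inv & pr_omega & _).
  intros He Hf Hk Hke Hkf.
  assert (Hk_idem : idem mul k) by apply Hk.
  split; [|split].
  - apply omega_l_pr; assumption.
  - apply omega_l_pr; assumption.
  - intros g Hg Heg Hfg.
    apply (pr_omega _ _ Hg (pr_idem _ Hk_idem)); rewrite pr_inv by exact Hk_idem.
    apply (Sset_omega_r_max Hk Hke (pr_idem _ He) (pr_idem _ Hg)).
    + exact (proj1 (pr_omega _ _ Hg He) Heg).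
    + exact (proj1 (pr_omega _ _ Hg Hf) Hfg).
Qed.

Lemma omega_l_zero (e g : S) :
  idem mul e -> idem mul g -> omega_l mul g e -> omega_l mul g (pr e) ->
  omega_l mul g z.
Proof.
  destruct HE2 as (_ & _ & _ & M_zero); intros He Hg Hge Hge'.
  assert (Heg : e * g = z).
  { apply (proj1 (M_zero _ _ He Hg) Hge').
    - exact (proj1 (Mset_mul_omega_l He Hg Hge)).
    - exact (Mset_mul_omega_l He Hg Hge). }
  unfold omega_l, idem in *.
  rewrite <- Heg, mul_assoc, Hge; exact Hg.
Qed.

End Complemented.

End Semigroup.

Theorem proposition5p4
  (S : Type) (mul : S -> S -> S)
  (Hassoc : associative_op mul) (Hreg : regular_sg mul)
  (z : S) (pr : S -> S)
  (HE1 : E1 mul z) (HE2 : E2 mul z pr) (HE3 : E3 mul pr) :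
  forall e f : S, idem mul e -> idem mul f -> omega mul f (pr e) ->
  forall k : S, Sset mul (pr e) (pr f) k -> Sset mul (pr f) (pr e) k ->
    (* k' = e (+) f *)
    L_is_join mul e f (pr k) /\
    L_is_meet mul e f z /\
    (forall g, idem mul g -> Lrel mul g z -> g = z).
Proof.
  intros e f He Hf [Hfe' _] k Hk_ef Hk_fe.
  destruct HE1 as [_ z_below].
  split; [|split].
  - apply (Sset_pr_L_is_join Hassoc HE2 He Hf Hk_ef).
    + exact (proj2 (proj2 (proj1 Hk_fe))).
    + exact (proj2 (proj2 (proj1 Hk_ef))).
  - split; [exact (proj1 (z_below e He)) | split; [exact (proj1 (z_below f Hf))|]].
    intros g Hg Hge Hgf.
    exact (omega_l_zero Hassoc HE2 He Hg Hge (omega_l_trans Hassoc Hgf Hfe')).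
  - intros g Hg [Hgz _].
    rewrite <- Hgz; exact (proj2 (z_below g Hg)).
Qed.
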